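(* Let $k,l\ge1$ with $k\ne l$, and let $r$ be an odd integer with $1\le r\le 4kl$. Then the set $\overline{\mathcal{B}}(2k,2l;r)$ contains exactly one board from each equivalence class of $\mathcal{B}(2k,2l;r)$ under $\langle H,V\rangle$.
   Context: A $2k\times 2l$ grid ($2k$ rows top to bottom, $2l$ columns left to right); $\mathcal{B}(2k,2l;r)$ is the set of boards, i.e. subsets of exactly $r$ blocked cells. $\langle H,V\rangle=\{R_0,H,V,R_{180}\}$ ($H$, $V$ reflections across the horizontal and vertical midlines, $R_{180}$ the 180-degree rotation) acts on boards; two boards are equivalent if one is mapped to the other. Quadrants: $Q_1$ = rows $1..k$, cols $1..l$; $Q_2$ = rows $1..k$, cols $l+1..2l$; $Q_3$ = rows $k+1..2k$, cols $l+1..2l$; $Q_4$ = rows $k+1..2k$, cols $1..l$; the board partition is $(\lambda_1,\lambda_2,\lambda_3,\lambda_4)$ with $\lambda_i$ the number of blocked cells in $Q_i$. $\overline{\mathcal{B}}(2k,2l;r)$ is the set of boards in $\mathcal{B}(2k,2l;r)$ whose board partition satisfies: $\lambda_1\ge\lambda_i$ for all $i>1$; if $\lambda_1=\lambda_2$ then $\lambda_3\ge\lambda_4$; if $\lambda_1=\lambda_3$ then $\lambda_2\ge\lambda_4$; if $\lambda_1=\lambda_4$ then $\lambda_2\ge\lambda_3$. *)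

From mathcomp Require Import all_boot.
Set Implicit Arguments. Unset Strict Implicit. Unset Printing Implicit Defensive.

(* A cell of the 2k x 2l grid: (row, column), 0-indexed;
   row 0 is the top row, column 0 the leftmost column. *)
Definition cell (k l : nat) := ('I_(2 * k) * 'I_(2 * l))%type.

(* A board: the set of blocked cells. *)
Definition board (k l : nat) := {set cell k l}.

Definition in_B (k l r : nat) (b : board k l) : bool := #|b| == r.

Definition Hmap (k l : nat) (c : cell k l) : cell k l := (rev_ord c.1, c.2).
Definition Vmap (k l : nat) (c : cell k l) : cell k l := (c.1, rev_ord c.2).
Definition R180map (k l : nat) (c : cell k l) : cell k l :=
  (rev_ord c.1, rev_ord c.2).

Definition equiv_HV (k l : nat) (b b' : board k l) : Prop :=
  [\/ b' = b, b' = [set Hmap c | c in b], b' = [set Vmap c | c in b]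
    | b' = [set R180map c | c in b]].

(* Quadrants (0-indexed: rows < k are rows 1..k, cols < l are cols 1..l). *)
Definition inQ1 (k l : nat) (c : cell k l) : bool := (c.1 < k) && (c.2 < l).
Definition inQ2 (k l : nat) (c : cell k l) : bool := (c.1 < k) && (l <= c.2).
Definition inQ3 (k l : nat) (c : cell k l) : bool := (k <= c.1) && (l <= c.2).
Definition inQ4 (k l : nat) (c : cell k l) : bool := (k <= c.1) && (c.2 < l).

Definition lam1 (k l : nat) (b : board k l) := #|[set c in b | inQ1 c]|.
Definition lam2 (k l : nat) (b : board k l) := #|[set c in b | inQ2 c]|.
Definition lam3 (k l : nat) (b : board k l) := #|[set c in b | inQ3 c]|.
Definition lam4 (k l : nat) (b : board k l) := #|[set c in b | inQ4 c]|.

Definition in_Bbar (k l r : nat) (b : board k l) : bool :=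
  [&& in_B r b,
      lam2 b <= lam1 b, lam3 b <= lam1 b, lam4 b <= lam1 b,
      (lam1 b == lam2 b) ==> (lam4 b <= lam3 b),
      (lam1 b == lam3 b) ==> (lam4 b <= lam2 b) &
      (lam1 b == lam4 b) ==> (lam3 b <= lam2 b)].

From mathcomp Require Import all_boot.
From mathcomp Require Import zify.

Set Implicit Arguments.
Unset Strict Implicit.
Unset Printing Implicit Defensive.

(* Flipping rows and/or columns is encoded by g : bool * bool and the quadrant
   of a cell by (top half?, left half?); then g moves quadrant q to q xor g, so
   the symmetries permute the four quadrant counts by the regular action of the
   Klein group.  The conditions of Bbar select the translate whose Q1 count is
   maximal, ties being broken by the two remaining counts; two translates could
   both qualify only if two complementary pairs of counts tied, which would
   make r, the sum of the counts, even. *)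

Lemma card_imset_filter (aT rT : finType) (f : aT -> rT) (A : {set aT})
    (p : pred rT) :
  injective f -> #|[set y in f @: A | p y]| = #|[set x in A | p (f x)]|.
Proof.
move=> f_inj; rewrite -[RHS](card_imset _ f_inj); apply: eq_card => y; rewrite inE.
apply/andP/imsetP => [[/imsetP [x Ax ->] px] | [x]]; first by exists x; rewrite ?inE ?Ax.
by rewrite inE => /andP [Ax px] ->; rewrite imset_f.
Qed.

Lemma card_sum_fibers (T J : finType) (f : T -> J) (A : {set T}) :
  #|A| = \sum_j #|[set x in A | f x == j]|.
Proof.
rewrite -sum1_card (partition_big f xpredT) //=; apply: eq_bigr => j _.
by rewrite -sum1_card; apply: eq_bigl => x; rewrite inE.
Qed.

Lemma sum_bool2 (f : bool * bool -> nat) :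
  \sum_q f q = f (true, true) + f (true, false) + f (false, true) + f (false, false).
Proof.
rewrite (eq_bigr (fun q => f (q.1, q.2))) => [|[] //].
by rewrite -(pair_big xpredT xpredT (fun x y => f (x, y))) /= !big_bool /= addnA.
Qed.

Definition xor2 (g h : bool * bool) : bool * bool := (g.1 (+) h.1, g.2 (+) h.2).

Lemma xor2K g : involutive (xor2^~ g).
Proof. by case: g => a b [x y]; rewrite /xor2 /= -!addbA !addbb !addbF. Qed.

(* The quadrants Q1, Q2, Q3, Q4 are (true, true), (true, false),
   (false, false) and (false, true). *)
Definition canonical_counts (f : bool * bool -> nat) : bool :=
  [&& f (true, false) <= f (true, true), f (false, false) <= f (true, true),
      f (false, true) <= f (true, true),
      (f (true, true) == f (true, false)) ==> (f (false, true) <= f (false, false)),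
      (f (true, true) == f (false, false)) ==> (f (false, true) <= f (true, false)) &
      (f (true, true) == f (false, true)) ==> (f (false, false) <= f (true, false))].

Lemma canonical_counts_unique (f : bool * bool -> nat) :
  odd (\sum_q f q) -> exists! g, canonical_counts (fun q => f (xor2 q g)).
Proof.
rewrite sum_bool2 => odd_sum.
have [g can_g] : exists g, canonical_counts (fun q => f (xor2 q g)).
  have : [|| canonical_counts (fun q => f (xor2 q (false, false))),
             canonical_counts (fun q => f (xor2 q (false, true))),
             canonical_counts (fun q => f (xor2 q (true, false))) |
             canonical_counts (fun q => f (xor2 q (true, true)))].
    by rewrite /canonical_counts /xor2 /=; lia.
  by case/or4P; eexists; eassumption.
exists g; split=> // g'; move: can_g; rewrite /canonical_counts /xor2.
by case: g g' => [[] []] [[] []] //= *; exfalso; lia.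
Qed.

Section Quadrants.
Variables k l : nat.

Definition flip (g : bool * bool) (c : cell k l) : cell k l :=
  (if g.1 then rev_ord c.1 else c.1, if g.2 then rev_ord c.2 else c.2).

Definition quadrant (c : cell k l) : bool * bool := (c.1 < k, c.2 < l).

Definition qcount (b : board k l) (q : bool * bool) : nat :=
  #|[set c in b | quadrant c == q]|.

Lemma flipK g : involutive (flip g).
Proof. by case: g => [[] []] [i j]; rewrite /flip /= ?rev_ordK. Qed.

Lemma equiv_HV_flip (b b' : board k l) :
  equiv_HV b b' <-> exists g, b' = flip g @: b.
Proof.
split=> [[] ->|[[[] []] ->]].
- by exists (false, false); rewrite -[LHS]imset_id; apply: eq_imset => -[].
- by exists (true, false).
- by exists (false, true).
- by exists (true, true).
- exact: Or44.
- exact: Or42.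
- exact: Or43.
- by apply: Or41; rewrite -[RHS]imset_id; apply: eq_imset => -[].
Qed.

Lemma rev_ord_lt_half n (i : 'I_(2 * n)) : (rev_ord i < n) = ~~ (i < n).
Proof. by rewrite /= -leqNgt; have := ltn_ord i; lia. Qed.

Lemma quadrant_flip g c : quadrant (flip g c) = xor2 (quadrant c) g.
Proof.
by case: g => [[] []]; rewrite /quadrant /flip /xor2 /= ?rev_ord_lt_half ?addbT ?addbF.
Qed.

Lemma qcount_flip g (b : board k l) q : qcount (flip g @: b) q = qcount b (xor2 q g).
Proof.
rewrite /qcount card_imset_filter; last exact/inv_inj/flipK.
by apply: eq_card => c; rewrite !inE quadrant_flip (inv_eq (xor2K g)).
Qed.

Lemma card_qcount (b : board k l) : #|b| = \sum_q qcount b q.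
Proof. exact: card_sum_fibers. Qed.

Lemma in_BbarE r (b : board k l) :
  in_Bbar r b = (#|b| == r) && canonical_counts (qcount b).
Proof.
have lamE (p : pred (cell k l)) q : p =1 (fun c => quadrant c == q) ->
    #|[set c in b | p c]| = qcount b q.
  by move=> pE; apply: eq_card => c; rewrite !inE pE.
rewrite /in_Bbar /in_B /lam1 /lam2 /lam3 /lam4 (lamE (@inQ1 k l) (true, true))
  1?(lamE (@inQ2 k l) (true, false)) 1?(lamE (@inQ3 k l) (false, false))
  1?(lamE (@inQ4 k l) (false, true)) //;
  move=> [i j]; rewrite /inQ2 /inQ3 /inQ4 /quadrant xpair_eqE /=;
  by case: (ltnP i k); case: (ltnP j l).
Qed.

Lemma in_Bbar_flip r g (b : board k l) : #|b| = r ->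
  in_Bbar r (flip g @: b) = canonical_counts (fun q => qcount b (xor2 q g)).
Proof.
move=> card_b; rewrite in_BbarE card_imset ?card_b ?eqxx; last exact/inv_inj/flipK.
by rewrite /canonical_counts !qcount_flip.
Qed.

End Quadrants.

Theorem proposition7p2 (k l r : nat) :
  1 <= k -> 1 <= l -> k != l -> odd r -> 1 <= r <= 4 * k * l ->
  forall b : board k l, in_B r b ->
    exists! b' : board k l, equiv_HV b b' /\ in_Bbar r b'.
Proof.
move=> _ _ _ odd_r _ b /eqP card_b.
have odd_counts : odd (\sum_q qcount b q) by rewrite -card_qcount card_b.
have [g [can_g g_uniq]] := canonical_counts_unique odd_counts.
exists (flip g @: b); split.
  by split; [apply/equiv_HV_flip; exists g | rewrite in_Bbar_flip].
by move=> _ [/equiv_HV_flip [g' ->]]; rewrite in_Bbar_flip // => /g_uniq ->.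
Qed.
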